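(* Let $f\colon\mathbb{R}\to\mathbb{R}$ be cliquish. Then $f$ is a Świątkowski function if and only if $f$ satisfies the condition $S(\mathbb{R},A,0)$ for every residual set $A\subset\mathbb{R}$.
   Context: $\mathrm{C}(f)$ denotes the set of continuity points of $f$. $f$ is cliquish if for all $a<b$ and every $\varepsilon>0$ there is a nondegenerate interval $I\subset(a,b)$ with $\operatorname{diam} f[I]<\varepsilon$. $f$ is a Świątkowski function if for all $a<b$ with $f(a)\neq f(b)$ there is $x\in(a,b)\cap\mathrm{C}(f)$ with $f(x)$ strictly between $f(a)$ and $f(b)$. For $a,b\in\mathbb{R}$, $I(a,b)$ denotes the open interval with end-points $a,b$. For $A\subset\mathbb{R}$, an interval $J$ and $\varepsilon\ge0$, $f$ satisfies $S(J,A,\varepsilon)$ if for all $a,b\in J$ with $f(a)<f(b)$ there exists $x\in A\cap I(a,b)$ with $f(x)\in(f(a)-\varepsilon,f(b)+\varepsilon)$. A set is residual if its complement is meager. *)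

From Stdlib Require Import Reals.
Open Scope R_scope.

Definition cliquish (f : R -> R) : Prop :=
  forall a b : R, a < b -> forall eps : R, 0 < eps ->
    exists c d : R, a <= c /\ c < d /\ d <= b /\
      exists r : R, r < eps /\
        forall x y : R, c < x < d -> c < y < d -> Rabs (f x - f y) <= r.

Definition swiatkowski (f : R -> R) : Prop :=
  forall a b : R, a < b -> f a <> f b ->
    exists x : R, a < x < b /\ continuity_pt f x /\
      Rmin (f a) (f b) < f x < Rmax (f a) (f b).

Definition Iab (a b x : R) : Prop := Rmin a b < x < Rmax a b.

Definition S_cond (f : R -> R) (J A : R -> Prop) (eps : R) : Prop :=
  forall a b : R, J a -> J b -> f a < f b ->
    exists x : R, A x /\ Iab a b x /\ f a - eps < f x < f b + eps.

Definition closure (A : R -> Prop) (x : R) : Prop :=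
  forall e : R, 0 < e -> exists y : R, A y /\ Rabs (y - x) < e.

Definition interior (B : R -> Prop) (x : R) : Prop :=
  exists e : R, 0 < e /\ forall y : R, Rabs (y - x) < e -> B y.

Definition nowhere_dense (A : R -> Prop) : Prop :=
  forall x : R, ~ interior (closure A) x.

Definition meager (A : R -> Prop) : Prop :=
  exists N : nat -> R -> Prop, (forall n, nowhere_dense (N n)) /\
    forall x : R, A x -> exists n : nat, N n x.

Definition residual (A : R -> Prop) : Prop := meager (fun x => ~ A x).

(* A cliquish function is continuous on a residual set: the points where its
   oscillation is at least eps form a nowhere dense set, since every interval
   contains a subinterval on which f oscillates by less than eps.  Taking A to
   be C(f), the condition S(R, A, 0) is exactly the Swiatkowski property.
   Conversely, if x is a continuity point with f(a) < f(x) < f(b), then f stays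
   strictly between f(a) and f(b) on a neighbourhood of x, and by the Baire
   category theorem every residual set A meets that neighbourhood. *)

From Pilot Require Import Defs.
From Stdlib Require Import Reals Lra Lia Classical ClassicalEpsilon.
Open Scope R_scope.

Lemma Rabs_sub_lt_iff (x y d : R) : Rabs (y - x) < d <-> x - d < y < x + d.
Proof.
  split.
  - intro H; destruct (Rabs_def2 _ _ H); lra.
  - intros [H1 H2]; apply Rabs_def1; lra.
Qed.

Lemma Iab_sym (a b x : R) : Iab b a x <-> Iab a b x.
Proof. unfold Iab; rewrite Rmin_comm, Rmax_comm; tauto. Qed.

Lemma Iab_lt (a b x : R) : a < b -> (Iab a b x <-> a < x < b).
Proof. intro Hab; unfold Iab; rewrite Rmin_left, Rmax_right by lra; tauto. Qed.

Lemma swiatkowski_iff_Iab (f : R -> R) :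
  swiatkowski f <->
  forall a b, f a < f b ->
    exists x, Iab a b x /\ continuity_pt f x /\ f a < f x < f b.
Proof.
  split.
  - intros Hs a b Hf.
    destruct (Rtotal_order a b) as [Hab | [-> | Hab]]; [| lra |].
    + destruct (Hs a b Hab ltac:(lra)) as [x [Hx [Hc Hfx]]].
      rewrite Rmin_left, Rmax_right in Hfx by lra.
      exists x; rewrite Iab_lt by lra; auto.
    + destruct (Hs b a Hab ltac:(lra)) as [x [Hx [Hc Hfx]]].
      rewrite Rmin_right, Rmax_left in Hfx by lra.
      exists x; rewrite <- Iab_sym, Iab_lt by lra; auto.
  - intros H a b Hab Hne.
    destruct (Rlt_or_le (f a) (f b)) as [Hf | Hf].
    + destruct (H a b Hf) as [x [Hx [Hc Hfx]]].
      rewrite Iab_lt in Hx by lra; rewrite Rmin_left, Rmax_right by lra.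
      exists x; auto.
    + destruct (H b a ltac:(lra)) as [x [Hx [Hc Hfx]]].
      rewrite Iab_sym, Iab_lt in Hx by lra; rewrite Rmin_right, Rmax_left by lra.
      exists x; auto.
Qed.

Lemma continuity_pt_iff_eps (f : R -> R) (x : R) :
  continuity_pt f x <->
  forall eps, 0 < eps -> exists delta, 0 < delta /\
    forall y, Rabs (y - x) < delta -> Rabs (f y - f x) < eps.
Proof.
  split.
  - intros H eps Heps. destruct (H eps Heps) as [delta [Hd Hy]].
    exists delta; split; [lra |]. intros y Hyx.
    destruct (Req_dec y x) as [-> | Hne].
    + rewrite Rminus_diag, Rabs_R0; exact Heps.
    + apply (Hy y); repeat split; auto.
  - intros H eps Heps. destruct (H eps Heps) as [delta [Hd Hy]].
    exists delta; split; [lra |]. intros y [_ Hyx]. exact (Hy y Hyx).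
Qed.

Lemma continuity_pt_strict_bounds (f : R -> R) (x lo hi l u : R) :
  continuity_pt f x -> lo < x < hi -> l < f x < u ->
  exists delta, 0 < delta /\
    forall y, Rabs (y - x) < delta -> lo < y < hi /\ l < f y < u.
Proof.
  intros Hc Hx Hfx.
  destruct (proj1 (continuity_pt_iff_eps f x) Hc (Rmin (f x - l) (u - f x)))
    as [delta [Hd Hnear]]; [apply Rmin_glb_lt; lra |].
  exists (Rmin delta (Rmin (x - lo) (hi - x))). split.
  - apply Rmin_glb_lt; [lra |]. apply Rmin_glb_lt; lra.
  - intros y Hy.
    pose proof (Rmin_l delta (Rmin (x - lo) (hi - x))).
    pose proof (Rmin_r delta (Rmin (x - lo) (hi - x))).
    pose proof (Rmin_l (x - lo) (hi - x)). pose proof (Rmin_r (x - lo) (hi - x)).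
    pose proof (Rmin_l (f x - l) (u - f x)). pose proof (Rmin_r (f x - l) (u - f x)).
    assert (Hfy : Rabs (f y - f x) < Rmin (f x - l) (u - f x)) by (apply Hnear; lra).
    apply Rabs_sub_lt_iff in Hy, Hfy. split; lra.
Qed.

(* [Defs.interior] is qualified because Stdlib's [Rtopology] also defines [interior]. *)
Lemma not_interior_exists (B : R -> Prop) (x e : R) :
  ~ Defs.interior B x -> 0 < e -> exists y, Rabs (y - x) < e /\ ~ B y.
Proof.
  intros Hx He. apply NNPP; intro Hn. apply Hx. exists e; split; [exact He |].
  intros y Hy. apply NNPP; intro HB. apply Hn. exists y; auto.
Qed.

Lemma not_closure_exists (A : R -> Prop) (y : R) :
  ~ closure A y -> exists e, 0 < e /\ forall z, Rabs (z - y) < e -> ~ A z.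
Proof.
  intro Hy. apply NNPP; intro Hn. apply Hy. intros e He. apply NNPP; intro Hn'.
  apply Hn. exists e; split; [exact He |]. intros z Hz Az. apply Hn'. exists z; auto.
Qed.

Lemma nowhere_dense_avoid_interval (N : R -> Prop) (a b : R) :
  nowhere_dense N -> a < b ->
  exists a' b', a <= a' /\ a' < b' /\ b' <= b /\ forall z, a' <= z <= b' -> ~ N z.
Proof.
  intros HN Hab.
  destruct (not_interior_exists _ ((a + b) / 2) ((b - a) / 2) (HN _) ltac:(lra))
    as [y [Hy Hcl]].
  apply Rabs_sub_lt_iff in Hy.
  destruct (not_closure_exists N y Hcl) as [e [He Hball]].
  set (r := Rmin e (Rmin (y - a) (b - y)) / 2).
  assert (Hr : 0 < r) by (apply Rdiv_lt_0_compat; [repeat apply Rmin_glb_lt |]; lra).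
  pose proof (Rmin_l e (Rmin (y - a) (b - y))). pose proof (Rmin_r e (Rmin (y - a) (b - y))).
  pose proof (Rmin_l (y - a) (b - y)). pose proof (Rmin_r (y - a) (b - y)).
  exists (y - r), (y + r). unfold r in *. repeat split; try lra.
  intros z Hz. apply Hball, Rabs_sub_lt_iff. lra.
Qed.

Section NestedIntervals.

Variables lo hi : nat -> R.
Hypothesis lo_lt_hi : forall k, lo k < hi k.
Hypothesis nested : forall k, lo k <= lo (S k) /\ hi (S k) <= hi k.

Lemma nested_lo_le (j k : nat) : (j <= k)%nat -> lo j <= lo k.
Proof.
  induction 1 as [| k _ IH]; [lra |]. destruct (nested k); lra.
Qed.

Lemma nested_hi_ge (j k : nat) : (j <= k)%nat -> hi k <= hi j.
Proof.
  induction 1 as [| k _ IH]; [lra |]. destruct (nested k); lra.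
Qed.

Lemma nested_lo_le_hi (j k : nat) : lo j <= hi k.
Proof.
  pose proof (nested_lo_le j (Nat.max j k) (Nat.le_max_l j k)).
  pose proof (nested_hi_ge k (Nat.max j k) (Nat.le_max_r j k)).
  pose proof (lo_lt_hi (Nat.max j k)). lra.
Qed.

Lemma nested_intervals_common_point : exists L, forall k, lo k <= L <= hi k.
Proof.
  set (E := fun y => exists k, y = lo k).
  assert (HE : bound E) by (exists (hi 0%nat); intros y [k ->]; apply nested_lo_le_hi).
  destruct (completeness E HE (ex_intro _ (lo 0%nat) (ex_intro _ 0%nat eq_refl)))
    as [L [Hub Hlub]].
  exists L. intro k. split.
  - apply Hub. exists k; reflexivity.
  - apply Hlub. intros y [j ->]. apply nested_lo_le_hi.
Qed.

End NestedIntervals.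

Lemma residual_meets_interval (A : R -> Prop) (a b : R) :
  residual A -> a < b -> exists y, A y /\ a < y < b.
Proof.
  intros [N [HN Hcover]] Hab.
  (* [shrink (k, p)] is a subinterval of [p] avoiding [N k]; junk when [p] is empty. *)
  destruct (choice (fun (kp : nat * (R * R)) (q : R * R) =>
      fst (snd kp) < snd (snd kp) ->
      fst (snd kp) <= fst q /\ fst q < snd q /\ snd q <= snd (snd kp) /\
      forall z, fst q <= z <= snd q -> ~ N (fst kp) z)) as [shrink Hshrink].
  { intros [k [c d]]; simpl.
    destruct (Rlt_or_le c d) as [Hcd | Hcd].
    - destruct (nowhere_dense_avoid_interval (N k) c d (HN k) Hcd) as [c' [d' H]].
      exists (c', d'); auto.
    - exists (0, 0); lra. }
  set (iv := fix iv (k : nat) : R * R :=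
    match k with
    | O => ((3 * a + b) / 4, (a + 3 * b) / 4)
    | S k => shrink (k, iv k)
    end).
  assert (Hlt : forall k, fst (iv k) < snd (iv k)).
  { induction k as [| k IH]; simpl; [lra |]. apply (Hshrink (k, iv k) IH). }
  destruct (nested_intervals_common_point (fun k => fst (iv k)) (fun k => snd (iv k)) Hlt)
    as [L HL].
  { intro k. destruct (Hshrink (k, iv k) (Hlt k)) as [H1 [_ [H3 _]]]. simpl in *; lra. }
  exists L. split.
  - apply NNPP; intro HA. destruct (Hcover L HA) as [n Hn].
    apply (proj2 (proj2 (proj2 (Hshrink (n, iv n) (Hlt n)))) L); [exact (HL (S n)) | exact Hn].
  - pose proof (HL 0%nat). simpl in *. lra.
Qed.

Definition osc_ge (f : R -> R) (eps x : R) : Prop :=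
  forall d, 0 < d -> exists u v,
    Rabs (u - x) < d /\ Rabs (v - x) < d /\ eps <= Rabs (f u - f v).

Lemma osc_ge_le (f : R -> R) (eps eps' x : R) :
  eps' <= eps -> osc_ge f eps x -> osc_ge f eps' x.
Proof.
  intros Hle H d Hd. destruct (H d Hd) as [u [v [Hu [Hv Huv]]]].
  exists u, v; repeat split; auto; lra.
Qed.

Lemma cliquish_osc_ge_nowhere_dense (f : R -> R) (eps : R) :
  cliquish f -> 0 < eps -> nowhere_dense (osc_ge f eps).
Proof.
  intros hf Heps x [e [He Hint]].
  destruct (hf (x - e / 2) (x + e / 2) ltac:(lra) eps Heps)
    as [c [d [Hc [Hcd [Hd [r [Hr Hosc]]]]]]].
  set (rho := (d - c) / 4).
  assert (Hcl : closure (osc_ge f eps) ((c + d) / 2))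
    by (apply Hint, Rabs_sub_lt_iff; lra).
  destruct (Hcl rho ltac:(unfold rho; lra)) as [z [Hz Hzm]].
  destruct (Hz rho ltac:(unfold rho; lra)) as [u [v [Hu [Hv Huv]]]].
  apply Rabs_sub_lt_iff in Hzm, Hu, Hv.
  assert (Rabs (f u - f v) <= r) by (apply Hosc; unfold rho in *; lra).
  lra.
Qed.

Lemma continuity_pt_of_not_osc_ge (f : R -> R) (x : R) :
  (forall eps, 0 < eps -> ~ osc_ge f eps x) -> continuity_pt f x.
Proof.
  intro H. apply continuity_pt_iff_eps. intros eps Heps.
  apply NNPP; intro Hn. apply (H eps Heps). intros d Hd.
  apply NNPP; intro Hn'. apply Hn. exists d; split; [exact Hd |].
  intros y Hy. apply Rnot_le_lt; intro Hfy. apply Hn'. exists y, x.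
  rewrite Rminus_diag, Rabs_R0. auto.
Qed.

Lemma cliquish_continuity_residual (f : R -> R) :
  cliquish f -> residual (continuity_pt f).
Proof.
  intro hf. exists (fun n => osc_ge f (/ INR (S n))). split.
  - intro n. apply cliquish_osc_ge_nowhere_dense; [exact hf |].
    apply Rinv_0_lt_compat, lt_0_INR; lia.
  - intros x Hx. apply NNPP; intro Hn. apply Hx, continuity_pt_of_not_osc_ge.
    intros eps Heps Hosc.
    destruct (archimed_cor1 eps Heps) as [[| n] [Hn_eps Hpos]]; [lia |].
    apply Hn. exists n. exact (osc_ge_le f eps _ x (Rlt_le _ _ Hn_eps) Hosc).
Qed.

Theorem mainTheorem3 (f : R -> R) (hf : cliquish f) :
  swiatkowski f <->
  (forall A : R -> Prop, residual A -> S_cond f (fun _ => True) A 0).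
Proof.
  rewrite swiatkowski_iff_Iab. split.
  - intros Hs A HA a b _ _ Hab.
    destruct (Hs a b Hab) as [x [Hx [Hc Hfx]]].
    destruct (continuity_pt_strict_bounds f x _ _ _ _ Hc Hx Hfx) as [d [Hd Hnear]].
    destruct (residual_meets_interval A (x - d) (x + d) HA ltac:(lra)) as [y [Ay Hy]].
    destruct (Hnear y (proj2 (Rabs_sub_lt_iff x y d) Hy)) as [Hy' Hfy].
    exists y. split; [exact Ay | split; [exact Hy' | lra]].
  - intros HS a b Hab.
    destruct (HS _ (cliquish_continuity_residual f hf) a b I I Hab) as [x [Hc [Hx Hfx]]].
    exists x. split; [exact Hx | split; [exact Hc | lra]].
Qed.
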